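(* Let $H$ be a real Hilbert space, let $D\subseteq H$ be a nonempty closed convex set, and let $T_1,\dots,T_m:D\to D$ be firmly nonexpansive operators with $F:=\bigcap_{i=1}^m\mathrm{Fix}(T_i)\neq\emptyset$. Let $\mathcal{M}'$ be a finite nonempty subset of $\mathcal{M}$, enumerated as $S_1,\dots,S_N$ with $N=|\mathcal{M}'|$ and $S_r=(\Omega_r,w_r)$, and set $T_{S_r}:=\sum_{t\in\Omega_r}w_r(t)T[t]$. Let $\hat w_1,\dots,\hat w_N$ be strictly positive reals with $\sum_{r=1}^N\hat w_r=1$, let $(\lambda_k)_{k\in\mathbb{N}}$ be a steering sequence, and let $u,x^0\in D$. Then the sequence defined by $$x^{k+1}=\lambda_k u+(1-\lambda_k)\sum_{r=1}^N\hat w_r\,T_{S_r}(x^k),\quad k\ge0,$$ converges strongly to $P_F(u)$.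
   Context: An operator $T:D\to H$ is firmly nonexpansive if $\|T(x)-T(y)\|^2\le\langle x-y,T(x)-T(y)\rangle$ for all $x,y\in D$. $\mathrm{Fix}(T)=\{x\in D: T(x)=x\}$; $P_F$ is the metric projection onto $F$. An index vector is a finite tuple $t=(t_1,\dots,t_q)$ with each $t_\ell\in\{1,\dots,m\}$; the string operator is $T[t]:=T_{t_q}T_{t_{q-1}}\cdots T_{t_1}$. A finite set $\Omega$ of index vectors is fit if every $i\in\{1,\dots,m\}$ appears as a component of some $t\in\Omega$. $\mathcal{M}$ denotes the collection of all pairs $(\Omega,w)$ where $\Omega$ is a fit finite set of index vectors and $w:\Omega\to(0,1]$ satisfies $\sum_{t\in\Omega}w(t)=1$. A steering sequence is a real sequence $(\lambda_k)_{k\in\mathbb{N}}$ with $\lambda_k\in[0,1]$ for all $k$, $\lim_{k\to\infty}\lambda_k=0$, $\sum_{k=0}^\infty\lambda_k=+\infty$, and $\sum_{k=0}^\infty|\lambda_{k+1}-\lambda_k|<\infty$. *)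

From HB Require Import structures.
From mathcomp Require Import all_boot all_order all_algebra.
From mathcomp Require Import all_classical all_reals all_analysis.
Set Implicit Arguments. Unset Strict Implicit. Unset Printing Implicit Defensive.
Import Order.TTheory GRing.Theory Num.Theory.
Import numFieldNormedType.Exports.
Local Open Scope classical_set_scope.
Local Open Scope ring_scope.

(* A real Hilbert space is a complete normed space V over R (a realType)
   whose norm comes from an inner product [ip]: symmetric, linear in the
   first argument, and ip x x = |x|^2. *)
Definition is_inner_product (R : realType) (V : normedModType R)
  (ip : V -> V -> R) : Prop :=
  [/\ (forall x y, ip x y = ip y x),
      (forall x y z, ip (x + y) z = ip x z + ip y z),
      (forall (a : R) x y, ip (a *: x) y = a * ip x y)
    & (forall x, ip x x = `|x| ^+ 2)].

Definition convex_subset (R : realType) (V : normedModType R) (D : set V) : Prop :=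
  forall x y (t : R), D x -> D y -> 0 <= t <= 1 -> D (t *: x + (1 - t) *: y).

Definition maps_into (R : realType) (V : normedModType R) (D : set V)
  (T : V -> V) : Prop := forall x, D x -> D (T x).

Definition firmly_nonexpansive (R : realType) (V : normedModType R)
  (ip : V -> V -> R) (D : set V) (T : V -> V) : Prop :=
  forall x y, D x -> D y -> `|T x - T y| ^+ 2 <= ip (x - y) (T x - T y).

Definition Fix (R : realType) (V : normedModType R) (D : set V)
  (T : V -> V) : set V := [set x | D x /\ T x = x].

Definition common_fix (R : realType) (V : normedModType R) (m : nat)
  (D : set V) (T : 'I_m -> V -> V) : set V :=
  [set x | D x /\ forall i, Fix D (T i) x].

(* string operator T[t] = T_{t_q} ... T_{t_1}  (T_{t_1} applied first) *)
Definition string_op (R : realType) (V : normedModType R) (m : nat)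
  (T : 'I_m -> V -> V) (t : seq 'I_m) (x : V) : V :=
  foldl (fun y i => T i y) x t.

(* index vectors are nonempty finite tuples with entries in {1..m}
   (represented as 'I_m); Omega is a finite set of index vectors
   (duplicate-free list) that is fit. *)
Definition fit (m : nat) (Omega : seq (seq 'I_m)) : Prop :=
  forall i : 'I_m, exists2 t, t \in Omega & i \in t.

Definition in_M (R : realType) (m : nat) (Omega : seq (seq 'I_m))
  (w : seq 'I_m -> R) : Prop :=
  [/\ uniq Omega, (forall t, t \in Omega -> (0 < size t)%N), fit Omega,
      (forall t, t \in Omega -> 0 < w t <= 1)
    & \sum_(t <- Omega) w t = 1].

Definition same_pair (R : realType) (m : nat) (Omega Omega' : seq (seq 'I_m))
  (w w' : seq 'I_m -> R) : Prop :=
  perm_eq Omega Omega' /\ (forall t, t \in Omega -> w t = w' t).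

Definition T_S (R : realType) (V : normedModType R) (m : nat)
  (T : 'I_m -> V -> V) (Omega : seq (seq 'I_m)) (w : seq 'I_m -> R)
  (x : V) : V :=
  \sum_(t <- Omega) w t *: string_op T t x.

Definition steering (R : realType) (lam : nat -> R) : Prop :=
  [/\ (forall k, 0 <= lam k <= 1),
      lam @ \oo --> (0 : R),
      (\sum_(0 <= k < n) lam k) @[n --> \oo] --> +oo
    & cvg ((\sum_(0 <= k < n) `|lam k.+1 - lam k|) @[n --> \oo])].

Definition is_metric_proj (R : realType) (V : normedModType R) (F : set V)
  (u p : V) : Prop :=
  F p /\ forall y, F y -> `|u - p| <= `|u - y|.

(* Let U := sum_r hw_r T_{S_r}.  The proof has two independent halves.

   (1) U is a nonexpansive self-map of D whose fixed-point set is exactly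
       F = cap_i Fix(T_i).  Nonexpansiveness and F <= Fix(U) are inherited
       from the firmly nonexpansive T_i through string products and convex
       combinations.  For Fix(U) <= F we use that these operations preserve
       *strict* quasi-nonexpansiveness: if |U y - p| = |y - p| for some
       p in F, then every string operator, hence every T_i (by fitness),
       fixes y.

   (2) Halpern's theorem: for any nonexpansive self-map U of a closed convex
       set D with Fix(U) = F nonempty and any steering sequence, the iterates
       x_{k+1} = lam_k u + (1 - lam_k) U x_k converge to P_F(u).  We follow
       the classical argument: Browder's curve z_t = t u + (1 - t) U z_t
       converges, as t -> 0, to P_F(u); the iterates are bounded and
       asymptotically regular; this gives limsup <u - p, x_k - p> <= 0, and
       Xu's lemma on real recursions |x_{k+1}-p|^2 <= (1-lam_k)|x_k-p|^2 +
       lam_k b_k finishes the proof. *)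
From HB Require Import structures.
From mathcomp Require Import all_boot all_order all_algebra.
From mathcomp Require Import all_classical all_reals all_analysis.
From mathcomp Require Import ring lra.
Set Implicit Arguments. Unset Strict Implicit. Unset Printing Implicit Defensive.
Import Order.TTheory GRing.Theory Num.Theory.
Import numFieldNormedType.Exports.
Local Open Scope classical_set_scope.
Local Open Scope ring_scope.

Section InnerProduct.
Context {R : realType} {V : normedModType R} {ip : V -> V -> R}.
Hypothesis hip : is_inner_product ip.

Lemma ipC x y : ip x y = ip y x. Proof. by case: hip. Qed.
Lemma ipDl x y z : ip (x + y) z = ip x z + ip y z. Proof. by case: hip. Qed.
Lemma ipZl a x y : ip (a *: x) y = a * ip x y. Proof. by case: hip. Qed.
Lemma ipxx x : ip x x = `|x| ^+ 2. Proof. by case: hip. Qed.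

Lemma ipDr x y z : ip x (y + z) = ip x y + ip x z.
Proof. by rewrite ipC ipDl ![ip _ x]ipC. Qed.

Lemma ipNl x y : ip (- x) y = - ip x y.
Proof. by rewrite -scaleN1r ipZl mulN1r. Qed.

Lemma ipNr x y : ip x (- y) = - ip x y.
Proof. by rewrite ipC ipNl ipC. Qed.

Lemma ipBl x y z : ip (x - y) z = ip x z - ip y z.
Proof. by rewrite ipDl ipNl. Qed.

Lemma ipBr x y z : ip x (y - z) = ip x y - ip x z.
Proof. by rewrite ipDr ipNr. Qed.

Lemma ip0l y : ip 0 y = 0.
Proof. by rewrite -(scale0r 0) ipZl mul0r. Qed.

Lemma ip_suml (I : Type) (s : seq I) (f : I -> V) z :
  ip (\sum_(i <- s) f i) z = \sum_(i <- s) ip (f i) z.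
Proof.
elim: s => [|a s IH]; first by rewrite !big_nil ip0l.
by rewrite !big_cons ipDl IH.
Qed.

Lemma normD2 x y : `|x + y| ^+ 2 = `|x| ^+ 2 + 2 * ip x y + `|y| ^+ 2.
Proof. rewrite -!ipxx ipDl !ipDr (ipC y x); ring. Qed.

Lemma normB2 x y : `|x - y| ^+ 2 = `|x| ^+ 2 - 2 * ip x y + `|y| ^+ 2.
Proof. by rewrite normD2 ipNr normrN; ring. Qed.

(* Cauchy-Schwarz, obtained from the triangle inequality. *)
Lemma cauchy_schwarz x y : ip x y <= `|x| * `|y|.
Proof.
have hD := normD2 x y; have htri : `|x + y| <= `|x| + `|y| := ler_normD x y.
have := normr_ge0 (x + y); have := normr_ge0 x; have := normr_ge0 y.
nra.
Qed.

Lemma ip_perturb a a' b b' :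
  ip a b <= ip a' b' + `|a - a'| * `|b| + `|a'| * `|b - b'|.
Proof.
have e : ip a b = ip (a - a') b + ip a' (b - b') + ip a' b'.
  rewrite ipBl ipBr; ring.
by rewrite e; have := cauchy_schwarz (a - a') b; have := cauchy_schwarz a' (b - b'); lra.
Qed.

End InnerProduct.

Section VectorIdentities.
Context {R : realType} {V : normedModType R}.

Lemma convex_combE (c : R) (x y : V) : c *: x + (1 - c) *: y = y + c *: (x - y).
Proof. by rewrite scalerBl scale1r scalerBr addrCA. Qed.

Lemma subr_telescope (x y z : V) : (x - y) + (y - z) = x - z.
Proof. by rewrite addrA subrK. Qed.

Lemma subrDl2 (a b c : V) : (a + b) - (a + c) = b - c.
Proof. by rewrite opprD addrACA subrr add0r. Qed.

Lemma subrB2 (x y q : V) : (x - q) - (y - q) = x - y.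
Proof. by rewrite opprB addrA subrK. Qed.

Lemma convex_comb_subr (c : R) (x y q : V) :
  c *: x + (1 - c) *: y - q = c *: (x - q) + (1 - c) *: (y - q).
Proof. by rewrite !convex_combE subrB2 addrAC. Qed.

End VectorIdentities.

Section ConvexCombination.
Context {R : realType} {V : normedModType R} {ip : V -> V -> R}.
Hypothesis hip : is_inner_product ip.
Context {I : eqType} {s : seq I} {c : I -> R}.
Hypothesis cpos : forall i, i \in s -> 0 < c i.
Hypothesis csum : \sum_(i <- s) c i = 1.

(* A positively weighted sum of nonnegative terms vanishes only if each term
   does; this is the source of all "equality case" arguments below. *)
Lemma wsum_le0 (g : I -> R) : (forall i, i \in s -> 0 <= g i) ->
  \sum_(i <- s) c i * g i <= 0 -> forall i, i \in s -> g i <= 0.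
Proof.
move=> g0 hs i si; have ci := cpos si.
have term_le : c i * g i <= \sum_(j <- s) c j * g j.
  rewrite (big_rem i si) /= lerDl big_seq_cond; apply: sumr_ge0 => j /andP[sj _].
  by rewrite mulr_ge0 ?g0 // ?ltW ?cpos // (mem_rem sj).
by rewrite -(pmulr_rle0 _ ci); apply: le_trans hs.
Qed.

Lemma wsum_const (q : V) : \sum_(i <- s) c i *: q = q.
Proof. by rewrite -scaler_suml csum scale1r. Qed.

Lemma wsum_constR (q : R) : \sum_(i <- s) c i * q = q.
Proof. by rewrite -mulr_suml csum mul1r. Qed.

Lemma wsum_sub (f : I -> V) (p : V) :
  \sum_(i <- s) c i *: f i - p = \sum_(i <- s) c i *: (f i - p).
Proof.
rewrite -{1}(wsum_const p) -sumrB; apply: eq_bigr => i _.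
by rewrite scalerBr.
Qed.

Lemma wsum_le (g h : I -> R) : (forall i, i \in s -> g i <= h i) ->
  \sum_(i <- s) c i * g i <= \sum_(i <- s) c i * h i.
Proof.
move=> gh; rewrite big_seq [X in _ <= X]big_seq; apply: ler_sum => i si.
by rewrite ler_wpM2l ?gh // ltW // cpos.
Qed.

Lemma wsum_ne (f g : I -> V) (d : R) :
  (forall i, i \in s -> `|f i - g i| <= d) ->
  `|\sum_(i <- s) c i *: f i - \sum_(i <- s) c i *: g i| <= d.
Proof.
move=> fg; rewrite -sumrB; apply: le_trans (ler_norm_sum _ _ _) _.
rewrite -(wsum_constR d) big_seq [X in _ <= X]big_seq.
apply: ler_sum => i si; have ci := ltW (cpos si).
by rewrite -scalerBr normrZ ger0_norm // ler_wpM2l // fg.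
Qed.

Lemma wsum_jensen (f : I -> V) :
  `|\sum_(i <- s) c i *: f i| ^+ 2 <= \sum_(i <- s) c i * `|f i| ^+ 2.
Proof.
set y := \sum_(i <- s) c i *: f i.
have e : `|y| ^+ 2 = \sum_(i <- s) c i * ip (f i) y.
  rewrite -(ipxx hip) {1}/y (ip_suml hip); apply: eq_bigr => i _.
  by rewrite (ipZl hip).
have le1 : `|y| ^+ 2 <= \sum_(i <- s) c i * ((`|f i| ^+ 2 + `|y| ^+ 2) / 2).
  rewrite {1}e; apply: wsum_le => i _.
  have := cauchy_schwarz hip (f i) y; have := sqr_ge0 (`|f i| - `|y|); nra.
have e2 : \sum_(i <- s) c i * ((`|f i| ^+ 2 + `|y| ^+ 2) / 2) =
    (\sum_(i <- s) c i * `|f i| ^+ 2) / 2 + `|y| ^+ 2 / 2.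
  rewrite -(wsum_constR (`|y| ^+ 2 / 2)) mulr_suml -big_split /=.
  by apply: eq_bigr => i _; ring.
lra.
Qed.

Lemma wsum_quasi (f : I -> V) (p : V) (B : R) :
  (forall i, i \in s -> `|f i - p| ^+ 2 <= B) ->
  `|\sum_(i <- s) c i *: f i - p| ^+ 2 <= B /\
  (B <= `|\sum_(i <- s) c i *: f i - p| ^+ 2 ->
     forall i, i \in s -> B <= `|f i - p| ^+ 2).
Proof.
move=> hB.
have J := wsum_jensen (fun i => f i - p); rewrite -wsum_sub in J.
have le2 : \sum_(i <- s) c i * `|f i - p| ^+ 2 <= B.
  by rewrite -(wsum_constR B); apply: wsum_le.
split; first lra.
move=> hge i si.
rewrite -subr_le0; apply: (@wsum_le0 (fun j => B - `|f j - p| ^+ 2) _ _ i si).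
  by move=> j sj; rewrite subr_ge0 hB.
have -> : \sum_(j <- s) c j * (B - `|f j - p| ^+ 2) =
   B - \sum_(j <- s) c j * `|f j - p| ^+ 2.
  rewrite [in RHS](esym (wsum_constR B)) -sumrB; apply: eq_bigr => j _; ring.
lra.
Qed.

End ConvexCombination.

Section ConvexCombinationSet.
Context {R : realType} {V : normedModType R}.
Context {I : eqType} {c : I -> R}.

Lemma wsum_pos (s : seq I) : s != [::] -> (forall i, i \in s -> 0 < c i) ->
  0 < \sum_(i <- s) c i.
Proof.
case: s => [//|b s] _ cp; rewrite big_cons; apply: ltr_pwDl.
  by apply: cp; rewrite inE eqxx.
by rewrite big_seq; apply: sumr_ge0 => j js; apply/ltW/cp; rewrite inE js orbT.
Qed.

(* Convex sets are closed under finite convex combinations; by induction on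
   the list of weights, normalised by their (positive) total mass. *)
Lemma wsum_in_convex (D : set V) (s : seq I) (f : I -> V) :
  convex_subset D -> s != [::] -> (forall i, i \in s -> 0 < c i) ->
  \sum_(i <- s) c i = 1 -> (forall i, i \in s -> D (f i)) ->
  D (\sum_(i <- s) c i *: f i).
Proof.
move=> cD sn cp csum fD.
suff : D ((\sum_(i <- s) c i)^-1 *: \sum_(i <- s) c i *: f i).
  by rewrite csum invr1 scale1r.
elim: s sn cp fD {csum} => [//|a s IH] _ cp fD.
have ha : 0 < c a by apply: cp; rewrite inE eqxx.
have Da : D (f a) by apply: fD; rewrite inE eqxx.
have cp' j : j \in s -> 0 < c j by move=> js; apply: cp; rewrite inE js orbT.
have fD' j : j \in s -> D (f j) by move=> js; apply: fD; rewrite inE js orbT.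
have [->|sn] := eqVneq s [::].
  by rewrite !big_cons !big_nil !addr0 scalerA mulVf ?gt_eqF // scale1r.
have IH' := IH sn cp' fD'.
set S := \sum_(i <- s) c i in IH'; set Y := \sum_(i <- s) c i *: f i in IH'.
have Spos : 0 < S by apply: wsum_pos.
have hS : 0 < c a + S by rewrite addr_gt0.
rewrite !big_cons -/S -/Y.
have := cD (f a) (S^-1 *: Y) (c a / (c a + S)) Da IH'.
have -> : 1 - c a / (c a + S) = S / (c a + S) by field; rewrite gt_eqF.
have -> : S / (c a + S) *: (S^-1 *: Y) = (c a + S)^-1 *: Y.
  by rewrite scalerA; congr (_ *: _); field; rewrite !gt_eqF.
rewrite scalerDr scalerA [(_ ^-1) * c a]mulrC; apply.
apply/andP; split; first by rewrite divr_ge0 // ltW.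
by rewrite ler_pdivrMr // mul1r lerDl ltW.
Qed.

End ConvexCombinationSet.

Section StringOperators.
Context {R : realType} {V : normedModType R} {ip : V -> V -> R}.
Hypothesis hip : is_inner_product ip.
Variables (D : set V) (m : nat) (T : 'I_m -> V -> V).
Hypothesis TD : forall i, maps_into D (T i).
Hypothesis Tfne : forall i, firmly_nonexpansive ip D (T i).

Lemma fne_nonexpansive i x y : D x -> D y -> `|T i x - T i y| <= `|x - y|.
Proof.
move=> Dx Dy; have h := Tfne i Dx Dy.
have := cauchy_schwarz hip (x - y) (T i x - T i y).
have := normr_ge0 (x - y); have := normr_ge0 (T i x - T i y).
nra.
Qed.

Lemma fne_strict_quasi i x p : D x -> D p -> T i p = p ->
  `|T i x - p| ^+ 2 + `|T i x - x| ^+ 2 <= `|x - p| ^+ 2.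
Proof.
move=> Dx Dp Tp; have h := Tfne i Dx Dp; rewrite Tp in h.
have e : x - p = (x - T i x) + (T i x - p) by rewrite subr_telescope.
rewrite e in h *; rewrite (normD2 hip (x - T i x)) [`|T i x - x|]distrC.
move: h; rewrite (ipDl hip) (ipxx hip); set a := ip _ _; lra.
Qed.

Lemma string_cons i t x : string_op T (i :: t) x = string_op T t (T i x).
Proof. by []. Qed.

Lemma string_D t x : D x -> D (string_op T t x).
Proof.
by elim: t x => [//|i t IH] x Dx; rewrite string_cons; apply/IH/TD.
Qed.

Lemma string_nonexpansive t x y : D x -> D y ->
  `|string_op T t x - string_op T t y| <= `|x - y|.
Proof.
elim: t x y => [//|i t IH] x y Dx Dy.
rewrite !string_cons; apply: le_trans (IH _ _ (TD i Dx) (TD i Dy)) _.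
exact: fne_nonexpansive.
Qed.

Lemma string_fix t q : (forall i, T i q = q) -> string_op T t q = q.
Proof. by move=> hq; elim: t => [//|i t IH]; rewrite string_cons hq. Qed.

Lemma string_quasi t x p : D x -> D p -> (forall i, T i p = p) ->
  `|string_op T t x - p| ^+ 2 <= `|x - p| ^+ 2 /\
  (`|x - p| ^+ 2 <= `|string_op T t x - p| ^+ 2 -> forall i, i \in t -> T i x = x).
Proof.
move=> + Dp Tp; elim: t x => [|i t IH] x Dx.
  by split => // _ i; rewrite in_nil.
rewrite string_cons; have [h1 h2] := IH _ (TD i Dx).
have hq := fne_strict_quasi Dx Dp (Tp i).
have hn := sqr_ge0 `|T i x - x|.
split; first lra.
move=> hge.
have Tix : T i x = x.
  apply/eqP; rewrite -subr_eq0 -normr_eq0 -sqrf_eq0 eq_le sqr_ge0 andbT; lra.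
move=> j; rewrite inE => /orP[/eqP->//|jt].
by rewrite Tix in h2 hge; apply: h2.
Qed.

Section CombinedString.
Variables (Om : seq (seq 'I_m)) (ww : seq 'I_m -> R).
Hypothesis hM : in_M Om ww.

Let wpos t : t \in Om -> 0 < ww t.
Proof. by case: hM => _ _ _ h _ /h /andP[]. Qed.
Let wsum : \sum_(t <- Om) ww t = 1.
Proof. by case: hM. Qed.
Let Om_nil : Om != [::].
Proof.
by apply/eqP => e; move: wsum; rewrite e big_nil => /eqP; rewrite eq_sym oner_eq0.
Qed.

Lemma TS_D x : convex_subset D -> D x -> D (T_S T Om ww x).
Proof.
move=> cD Dx; apply: (wsum_in_convex cD Om_nil wpos wsum) => t _.
exact: string_D.
Qed.

Lemma TS_nonexpansive x y : D x -> D y ->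
  `|T_S T Om ww x - T_S T Om ww y| <= `|x - y|.
Proof.
move=> Dx Dy; apply: (wsum_ne wpos wsum) => t _; exact: string_nonexpansive.
Qed.

Lemma TS_fix q : (forall i, T i q = q) -> T_S T Om ww q = q.
Proof.
move=> hq; rewrite /T_S -{2}(wsum_const wsum q); apply: eq_bigr => t _.
by rewrite string_fix.
Qed.

Lemma TS_quasi x p : D x -> D p -> (forall i, T i p = p) ->
  `|T_S T Om ww x - p| ^+ 2 <= `|x - p| ^+ 2 /\
  (`|x - p| ^+ 2 <= `|T_S T Om ww x - p| ^+ 2 ->
     forall t, t \in Om -> forall i, i \in t -> T i x = x).
Proof.
move=> Dx Dp Tp.
have [h1 h2] := wsum_quasi hip wpos wsum (f := fun t => string_op T t x)
   (fun t _ => (string_quasi t Dx Dp Tp).1).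
split => // hge t tO.
exact: (string_quasi t Dx Dp Tp).2 (h2 hge t tO).
Qed.

End CombinedString.

Section AveragedOperator.
Variables (N : nat) (Omega : 'I_N -> seq (seq 'I_m)) (w : 'I_N -> seq 'I_m -> R)
  (hw : 'I_N -> R).
Hypothesis hM : forall r, in_M (Omega r) (w r).
Hypothesis hwpos : forall r, 0 < hw r.
Hypothesis hwsum : \sum_(r < N) hw r = 1.
Hypothesis N_gt0 : (0 < N)%N.

Definition avg_op (y : V) : V := \sum_(r < N) hw r *: T_S T (Omega r) (w r) y.

Let cpos r : r \in index_enum 'I_N -> 0 < hw r.
Proof. by move=> _; exact: hwpos. Qed.
Let r0 : 'I_N := Ordinal N_gt0.

Lemma avg_D y : convex_subset D -> D y -> D (avg_op y).
Proof.
move=> cD Dy; apply: wsum_in_convex => //.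
- by apply/eqP => e; have := mem_index_enum r0; rewrite e.
- by move=> r _; exact: TS_D.
Qed.

Lemma avg_nonexpansive y y' : D y -> D y' -> `|avg_op y - avg_op y'| <= `|y - y'|.
Proof.
by move=> Dy Dy'; apply: (wsum_ne cpos hwsum) => r _; exact: TS_nonexpansive.
Qed.

Lemma avg_fix q : common_fix D T q -> avg_op q = q.
Proof.
move=> [Dq Fq]; rewrite /avg_op -{2}(wsum_const hwsum q).
by apply: eq_bigr => r _; rewrite TS_fix // => i; have [] := Fq i.
Qed.

(* Fix(U) is contained in F: at a fixed point of U the equality case of
   quasi-nonexpansiveness propagates to every string of S_{r0}, and by
   fitness every index i occurs in one of them. *)
Lemma avg_fix_common y : common_fix D T !=set0 -> D y -> avg_op y = y ->
  common_fix D T y.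
Proof.
move=> [p [Dp Fp]] Dy Uy; split => // i; split => //.
have Tp j : T j p = p by have [] := Fp j.
have quasi r := TS_quasi (hM r) Dy Dp Tp.
have [_ hU] := wsum_quasi hip cpos hwsum (f := fun r => T_S T (Omega r) (w r) y)
  (fun r _ => (quasi r).1).
have [_ _ fit_r0 _ _] := hM r0; have [t tO it] := fit_r0 i.
apply: (quasi r0).2 t tO i it; apply: hU (mem_index_enum _).
by rewrite -/(avg_op y) Uy.
Qed.

End AveragedOperator.
End StringOperators.

Section SequenceFacts.
Context {R : realType}.

Lemma eventuallyP (P : nat -> Prop) :
  (\forall n \near \oo, P n) <-> exists N, forall n, (N <= n)%N -> P n.
Proof.
split; first by case=> N _ HN; exists N => n hn; apply: HN.
by case=> N HN; exists N => // n /= hn; apply: HN.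
Qed.

Lemma cvg_epsP {V : normedModType R} (g : nat -> V) p :
  g @ \oo --> p <->
  forall e, 0 < e -> exists N, forall n, (N <= n)%N -> `|g n - p| < e.
Proof.
rewrite cvgrPdistC_lt; split => h e e0; apply/eventuallyP; exact: h.
Qed.

Lemma cauchy_eps_cvg {V : completeNormedModType R} (g : nat -> V) :
  (forall e, 0 < e -> exists N, forall n, (N <= n)%N -> `|g N - g n| < e) ->
  exists p : V, g @ \oo --> p.
Proof.
move=> hc; suff /cvg_ex[p gp] : cvgn g by exists p.
apply/cauchy_cvgP/cauchy_exP => e e0.
have [N HN] := hc e e0.
exists (g N); apply/eventuallyP; exists N => n hn.
by rewrite -ball_normE /ball /=; apply: HN.
Qed.

Lemma le0_eps (c : R) : (forall e, 0 < e -> c <= e) -> c <= 0.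
Proof.
move=> h; rewrite leNgt; apply/negP => c0.
by have := h (c / 2); rewrite divr_gt0 // => /(_ isT); lra.
Qed.

Lemma partial_sums_unbounded (g : nat -> R) :
  (\sum_(0 <= k < n) g k) @[n --> \oo] --> +oo ->
  forall M, exists N, forall n, (N <= n)%N -> M <= \sum_(0 <= k < n) g k.
Proof. by move=> /cvgryPge h M; exact/eventuallyP/h. Qed.

Lemma series_tail_small (h : nat -> R) :
  cvg ((\sum_(0 <= k < n) h k) @[n --> \oo]) ->
  forall e, 0 < e -> exists N, forall m n, (N <= m)%N -> (m <= n)%N ->
    \sum_(m <= k < n) h k <= e.
Proof.
move=> /cvg_ex [L hL] e e0.
have [N HN] := (cvg_epsP _ _).1 hL (e / 2) (divr_gt0 e0 (ltr0Sn _ 1)).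
exists N => m n Nm mn.
have h1 := HN n (leq_trans Nm mn); have h2 := HN m Nm.
rewrite (big_cat_nat (n := m) (m := 0%N)) //= in h1.
move: h1 h2; set A := \sum_(0 <= k < m) h k; set B := \sum_(m <= k < n) h k.
move=> h1 h2; rewrite -normrN opprB in h2.
have := ler_normD (A + B - L) (L - A).
have -> : A + B - L + (L - A) = B by rewrite addrA subrK addrC addKr.
by have := ler_norm B; lra.
Qed.

End SequenceFacts.

(* Xu's lemma: a nonnegative sequence with
     a_{k+1} <= (1 - g_k) a_k + g_k b_k + d_k,
   where sum g_k = +oo, limsup b_k <= 0 and sum d_k < oo, tends to 0.
   The proof has two phases: below any level the sequence eventually drops
   under 2c (otherwise the divergent sum g_k drives it negative), and once
   there it stays under 2c plus a tail of sum d_k. *)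
Section XuLemma.
Context {R : realType}.
Variables (a g d : nat -> R).
Hypothesis a_ge0 : forall k, 0 <= a k.
Hypothesis g01 : forall k, 0 <= g k <= 1.
Hypothesis d_ge0 : forall k, 0 <= d k.

Section Phases.
Variables (c : R) (K : nat).
Hypothesis c_gt0 : 0 < c.
Hypothesis rec : forall k, (K <= k)%N -> a k.+1 <= (1 - g k) * a k + g k * c + d k.

Lemma xu_reach :
  (forall M, exists N, forall n, (N <= n)%N -> M <= \sum_(0 <= k < n) g k) ->
  (forall n, (K <= n)%N -> \sum_(K <= k < n) d k <= c) ->
  exists2 n0, (K <= n0)%N & a n0 <= 2 * c.
Proof.
move=> gdiv dtail; case: (pselect (exists2 n0, (K <= n0)%N & a n0 <= 2 * c)) => // low.
exfalso.
have above n : (K <= n)%N -> 2 * c < a n.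
  by move=> Kn; rewrite ltNge; apply/negP => hle; apply: low; exists n.
have descent j : a (K + j)%N <=
    a K - c * \sum_(K <= k < K + j) g k + \sum_(K <= k < K + j) d k.
  elim: j => [|j IH]; first by rewrite addn0 !big_geq // mulr0 subr0 addr0.
  rewrite addnS !big_nat_recr ?leq_addr //=.
  have h1 := rec (leq_addr j K); have h2 := above _ (leq_addr j K).
  have [g0 g1] := andP (g01 (K + j)%N).
  have : g (K + j)%N * c <= g (K + j)%N * (a (K + j)%N - c).
    by rewrite ler_wpM2l //; lra.
  move: h1 h2 IH; set A := a _; set G := g _; set S1 := \sum_(_ <= _ < _) g _;
    set S2 := \sum_(_ <= _ < _) d _.
  rewrite mulrDr; nra.
set M := \sum_(0 <= k < K) g k + (a K + c) / c + 1.
have [N3 HN3] := gdiv M.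
pose n := maxn N3 K.
have Kn : (K <= n)%N by rewrite leq_maxr.
have := descent (n - K)%N; rewrite subnKC //.
have hd := dtail n Kn; have hg := HN3 n (leq_maxl _ _).
rewrite (big_cat_nat (n := K)) //= in hg.
have hM : c * M = c * \sum_(0 <= k < K) g k + (a K + c) + c.
  by rewrite /M; field; exact: lt0r_neq0.
have := a_ge0 n.
have : c * M <= c * (\sum_(0 <= k < K) g k + \sum_(K <= k < n) g k).
  by rewrite ler_wpM2l // ltW.
rewrite hM mulrDr; move: hd.
set SK := \sum_(K <= k < n) g k; set S0 := \sum_(0 <= k < K) g k.
set SD := \sum_(K <= k < n) d k; set P := c * S0; set Q := c * SK.
have := c_gt0; lra.
Qed.

Lemma xu_stay n0 : (K <= n0)%N -> a n0 <= 2 * c ->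
  forall j, a (n0 + j)%N <= 2 * c + \sum_(n0 <= k < n0 + j) d k.
Proof.
move=> Kn0 an0; elim=> [|j IH]; first by rewrite addn0 big_geq // addr0.
rewrite addnS big_nat_recr ?leq_addr //=.
have h1 := rec (leq_trans Kn0 (leq_addr j n0)).
have [g0 g1] := andP (g01 (n0 + j)%N).
have S0 : 0 <= \sum_(n0 <= k < n0 + j) d k by apply: sumr_ge0.
move: h1 IH S0 g0 g1; set A := a (n0 + j)%N; set G := g _.
set S := \sum_(_ <= _ < _) d _ => h1 IH S0 g0 g1.
have : (1 - G) * A <= (1 - G) * (2 * c + S) by rewrite ler_wpM2l //; lra.
have : 0 <= G * (c + S) by rewrite mulr_ge0 // addr_ge0 // ltW.
nra.
Qed.

End Phases.

Lemma xu (b : nat -> R) :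
 (forall M, exists N, forall n, (N <= n)%N -> M <= \sum_(0 <= k < n) g k) ->
 (forall e, 0 < e -> exists N, forall m n, (N <= m)%N -> (m <= n)%N ->
    \sum_(m <= k < n) d k <= e) ->
 (forall e, 0 < e -> exists N, forall k, (N <= k)%N -> b k <= e) ->
 (forall k, a k.+1 <= (1 - g k) * a k + g k * b k + d k) ->
 forall e, 0 < e -> exists N, forall n, (N <= n)%N -> a n <= e.
Proof.
move=> gdiv dtail bsmall rec e e0.
have c0 : 0 < e / 3 by rewrite divr_gt0.
have [N1 HN1] := bsmall _ c0; have [N2 HN2] := dtail _ c0.
pose K := maxn N1 N2.
have KN1 : (N1 <= K)%N by rewrite leq_maxl.
have KN2 : (N2 <= K)%N by rewrite leq_maxr.
have rec' k : (K <= k)%N -> a k.+1 <= (1 - g k) * a k + g k * (e / 3) + d k.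
  move=> hk; apply: le_trans (rec k) _; rewrite lerD2r lerD2l.
  by rewrite ler_wpM2l ?HN1 ?(leq_trans KN1) //; case/andP: (g01 k).
have [n0 Kn0 an0] := xu_reach c0 rec' gdiv (fun n => HN2 K n KN2).
exists n0 => n hn.
have := xu_stay c0 rec' Kn0 an0 (n - n0)%N; rewrite subnKC //.
have := HN2 n0 n (leq_trans KN2 Kn0) hn; lra.
Qed.

End XuLemma.

Lemma variational_le_dist (R : realType) (V : normedModType R) (ip : V -> V -> R)
    (u z y : V) :
  is_inner_product ip -> 0 <= ip (u - z) (z - y) -> `|u - z| <= `|u - y|.
Proof.
move=> hip h.
have e : u - z = (u - y) - (z - y) by rewrite opprB addrA subrK.
have h2 : `|u - z| ^+ 2 = ip (u - z) (u - y) - ip (u - z) (z - y).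
  by rewrite -(ipxx hip) -(ipBr hip) -e.
have := cauchy_schwarz hip (u - z) (u - y).
have := normr_ge0 (u - z); have := normr_ge0 (u - y).
move: h h2; set X := ip _ (z - y); set Y := ip _ (u - y); set A := `|u - z|.
set B := `|u - y|; nra.
Qed.

Lemma contraction_fixed_point (R : realType) (V : completeNormedModType R)
    (D : set V) (G : V -> V) (q : R) :
  closed D -> D !=set0 -> (forall x, D x -> D (G x)) -> 0 <= q < 1 ->
  (forall x y, D x -> D y -> `|G x - G y| <= q * `|x - y|) ->
  exists2 p, D p & p = G p.
Proof.
move=> cD D0 GD /andP[q0 q1] Gq.
have [g gE] := Pfun GD.
rewrite gE; apply: banach_fixed_point => //.
exists (NngNum q0); split => //.
by case=> x y [/= Dx Dy] /=; rewrite -gE; exact: Gq.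
Qed.

Section Halpern.
Context {R : realType} {V : completeNormedModType R} {ip : V -> V -> R}.
Hypothesis hip : is_inner_product ip.
Variables (D F : set V) (U : V -> V).
Hypothesis cD : closed D.
Hypothesis cvD : convex_subset D.
Hypothesis UD : forall x, D x -> D (U x).
Hypothesis Une : forall x y, D x -> D y -> `|U x - U y| <= `|x - y|.
Hypothesis FD : forall q, F q -> D q.
Hypothesis UF : forall q, F q -> U q = q.
Hypothesis FU : forall x, D x -> U x = x -> F x.
Variable u : V.
Hypothesis Du : D u.

(* Browder's approximating curve: for t in (0,1), z_t is the fixed point in D
   of the contraction z |-> t u + (1 - t) U z. *)
Definition on_curve (t : R) (z : V) : Prop := D z /\ z = t *: u + (1 - t) *: U z.

Lemma monotone_resolvent a b : D a -> D b -> 0 <= ip ((a - U a) - (b - U b)) (a - b).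
Proof.
move=> Da Db.
have -> : (a - U a) - (b - U b) = (a - b) - (U a - U b).
  by rewrite !opprB addrACA [RHS]addrACA; congr (_ + _); rewrite addrC.
rewrite (ipBl hip) (ipxx hip).
have := cauchy_schwarz hip (U a - U b) (a - b); have := Une Da Db.
have := normr_ge0 (a - b); have := normr_ge0 (U a - U b).
set X := ip _ _; set A := `|a - b|; set B := `|U a - U b|; nra.
Qed.

Lemma curve_exists t : 0 < t < 1 -> exists z, on_curve t z.
Proof.
move=> /andP[t0 t1].
have [z Dz ez] : exists2 z, D z & z = t *: u + (1 - t) *: U z.
  apply: (@contraction_fixed_point R V D _ (1 - t) cD (ex_intro _ u Du)).
  - by move=> y Dy; apply: cvD => //; [exact: UD | rewrite !ltW].
  - by apply/andP; split; lra.
  - move=> y y' Dy Dy'; rewrite subrDl2 -scalerBr normrZ ger0_norm; last lra.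
    by rewrite ler_wpM2l ?Une //; lra.
by exists z.
Qed.

Lemma curve_resolvent t z : 0 < t < 1 -> on_curve t z ->
  z - U z = (t / (1 - t)) *: (u - z).
Proof.
move=> /andP[t0 t1] [_ ez].
have e1 : z - U z = t *: (u - U z).
  by rewrite {1}ez convex_combE addrAC subrr add0r.
have e2 : u - z = (1 - t) *: (u - U z).
  by rewrite {1}ez opprD addrA scalerBr [(1 - t) *: u]scalerBl scale1r.
rewrite e1 e2 scalerA; congr (_ *: _); field; lra.
Qed.

(* Each curve point satisfies the variational inequality characterising the
   projection onto F. *)
Lemma curve_variational t z y : 0 < t < 1 -> on_curve t z -> F y ->
  0 <= ip (u - z) (z - y).
Proof.
move=> ht zc Fy.
have := monotone_resolvent zc.1 (FD Fy).
rewrite (curve_resolvent ht zc) (UF Fy) subrr subr0 (ipZl hip).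
case/andP: ht => t0 t1.
by rewrite pmulr_rge0 // divr_gt0 //; lra.
Qed.

(* Along the curve, |u - z_t|^2 decreases in t, with the gap controlling
   |z_s - z_r|^2; this makes the curve Cauchy as t -> 0. *)
Lemma curve_gap a b s r : D a -> D b -> 0 < r -> r < s ->
  a - U a = s *: (u - a) -> b - U b = r *: (u - b) ->
  `|a - b| ^+ 2 <= `|u - b| ^+ 2 - `|u - a| ^+ 2.
Proof.
move=> Da Db r0 rs ea eb.
have eab : a - b = (u - b) - (u - a) by rewrite subrDl2 opprK addrC.
have := monotone_resolvent Da Db; rewrite ea eb eab.
move: (u - a) (u - b) => al be.
have L0 := sqr_ge0 `|be - al|.
rewrite (normB2 hip) in L0 *.
rewrite (ipBl hip) !(ipBr hip) !(ipZl hip) !(ipxx hip) (ipC hip al).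
set X := ip _ _; set A := `|al| ^+ 2; set B := `|be| ^+ 2 => h.
have h1 : (s + r) * (B - 2 * X + A) <= (s - r) * (B - A) by nra.
have h2 : 0 <= B - A.
  have : 0 <= (s - r) * (B - A) by apply: le_trans h1; apply: mulr_ge0 => //; lra.
  by rewrite pmulr_rge0 //; lra.
have h3 : (s - r) * (B - A) <= (s + r) * (B - A) by rewrite ler_wpM2r //; lra.
have h4 : (s + r) * (B - 2 * X + A) <= (s + r) * (B - A) by lra.
by rewrite ler_pM2l in h4 => //; lra.
Qed.

Lemma curve_estimate t z p y : 0 < t < 1 -> on_curve t z -> D y ->
  ip (u - p) (y - p) <= `|U y - y| * `|z - y| / t + `|z - p| * (`|y - p| + `|u - z|).
Proof.
move=> /andP[t0 t1] [Dz ez] Dy.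
have key : t * ip (u - z) (y - z) <= `|U y - y| * `|z - y|.
  have e1 : z - y = t *: (u - y) + (1 - t) *: (U z - y)
    by rewrite {1}ez convex_comb_subr.
  have e2 : u - y = (u - z) + (z - y) by rewrite subr_telescope.
  have h1 : `|z - y| ^+ 2 = t * ip (u - z) (z - y) + t * `|z - y| ^+ 2
       + (1 - t) * ip (U z - y) (z - y).
    rewrite -(ipxx hip) {1}e1 (ipDl hip) !(ipZl hip) e2 (ipDl hip) (ipxx hip).
    ring.
  have h2 := cauchy_schwarz hip (U z - y) (z - y).
  have h3 : `|U z - y| <= `|z - y| + `|U y - y|.
    rewrite -(subr_telescope (U z) (U y) y); apply: le_trans (ler_normD _ _) _.
    by rewrite lerD2r Une.
  rewrite -[y - z]opprB (ipNr hip).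
  have n0 := normr_ge0 (z - y); have n1 := normr_ge0 (U y - y).
  have h4 : (1 - t) * ip (U z - y) (z - y) <=
      (1 - t) * ((`|z - y| + `|U y - y|) * `|z - y|).
    apply: ler_wpM2l; first lra.
    by apply: le_trans h2 _; rewrite ler_wpM2r.
  move: h1 h4; set X := ip (u - z) _; set A := `|z - y|; set B := `|U y - y|.
  set Y := ip _ _ => h1 h4.
  have : 0 <= t * (B * A) by rewrite mulr_ge0 // ?mulr_ge0 // ltW.
  nra.
have h1 : ip (u - z) (y - z) <= `|U y - y| * `|z - y| / t.
  by rewrite ler_pdivlMr // mulrC.
have h2 := ip_perturb hip (u - p) (u - z) (y - p) (y - z).
rewrite !subrDl2 !opprK [- p + z]addrC in h2.
lra.
Qed.

Definition curve_par (n : nat) : R := (n.+2%:R)^-1.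

Lemma curve_par01 n : 0 < curve_par n < 1.
Proof. by rewrite /curve_par invr_gt0 ltr0n /= invf_lt1 ?ltr0n // ltr1n. Qed.

Lemma curve_par_ratio n : curve_par n / (1 - curve_par n) = (n.+1%:R)^-1.
Proof.
rewrite /curve_par -natr1.
have hn : 0 <= (n.+1%:R : R) := ler0n _ _.
by field; apply/andP; split; rewrite gt_eqF //; lra.
Qed.

Section CurveSequence.
Variable z : nat -> V.
Hypothesis zc : forall n, on_curve (curve_par n) (z n).
Variable q : V.
Hypothesis Fq : F q.

Lemma curve_seq_resolvent n : z n - U (z n) = (n.+1%:R)^-1 *: (u - z n).
Proof. by rewrite (curve_resolvent (curve_par01 n) (zc n)) curve_par_ratio. Qed.

Lemma curve_seq_bounded n : `|u - z n| <= `|u - q|.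
Proof. exact/(variational_le_dist hip)/(curve_variational (curve_par01 n) (zc n)). Qed.

Lemma curve_seq_gap n k : (n <= k)%N ->
  `|z n - z k| ^+ 2 <= `|u - z k| ^+ 2 - `|u - z n| ^+ 2.
Proof.
rewrite leq_eqVlt => /orP[/eqP->|nk]; first by rewrite !subrr normr0 expr0n.
apply: (curve_gap (zc n).1 (zc k).1 _ _ (curve_seq_resolvent n)
  (curve_seq_resolvent k)); first by rewrite invr_gt0 ltr0n.
by rewrite ltf_pV2 ?posrE ?ltr0n // ltr_nat ltnS.
Qed.

(* |u - z_n|^2 is nondecreasing and bounded, hence convergent, and by the gap
   inequality the sequence z_n is Cauchy. *)
Lemma curve_seq_cvg : exists p : V, z @ \oo --> p.
Proof.
pose f n := `|u - z n| ^+ 2.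
have fnd : nondecreasing_seq f.
  move=> n k nk; have := curve_seq_gap nk; have := sqr_ge0 `|z n - z k|.
  rewrite /f; lra.
have fub : has_ubound (range f).
  exists (`|u - q| ^+ 2) => _ [n _ <-]; rewrite /f.
  by rewrite lerXn2r ?nnegrE // curve_seq_bounded.
have fcv := nondecreasing_cvgn fnd fub.
apply: cauchy_eps_cvg => e e0.
have [N HN] := (cvg_epsP _ _).1 fcv _ (divr_gt0 (exprn_gt0 2 e0) (ltr0Sn _ 1)).
exists N => n Nn.
have h1 := HN n Nn; have h2 := HN N (leqnn N); have h3 := curve_seq_gap Nn.
have a1 := ler_norm (f n - sup (range f)).
have a2 : sup (range f) - f N <= `|f N - sup (range f)| by rewrite distrC ler_norm.
have : `|z N - z n| ^+ 2 < e ^+ 2 by move: h3; rewrite -/(f n) -/(f N); lra.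
by have := normr_ge0 (z N - z n); nra.
Qed.

Variable p : V.
Hypothesis zp : z @ \oo --> p.

Lemma curve_limit_D : D p.
Proof. by apply: (closed_cvg D cD _ p zp); apply: nearW => n; exact: (zc n).1. Qed.

(* The limit is fixed by U: |U p - p| <= 2 |z_n - p| + |U z_n - z_n| and
   |U z_n - z_n| = |u - z_n| / (n + 1) tends to 0. *)
Lemma curve_limit_fixed : F p.
Proof.
apply: FU curve_limit_D _; apply/eqP; rewrite -subr_eq0 -normr_le0.
apply: le0_eps => e e0.
have e30 : 0 < e / 3 by rewrite divr_gt0.
have [N1 HN1] := (cvg_epsP _ _).1 zp _ e30.
have [N2 HN2] := (eventuallyP _).1 (nbhs_infty_ger (`|u - q| / (e / 3))).
pose n := maxn N1 N2.
have h1 := HN1 n (leq_maxl _ _).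
have h2 : `|U (z n) - z n| <= e / 3.
  rewrite distrC curve_seq_resolvent normrZ ger0_norm ?invr_ge0 ?ler0n //.
  rewrite ler_pdivrMl ?ltr0n //; apply: le_trans (curve_seq_bounded n) _.
  rewrite -ler_pdivrMr //; apply: le_trans (HN2 n (leq_maxr _ _)) _.
  by rewrite ler_nat.
have h3 : `|U p - U (z n)| <= `|z n - p|.
  by rewrite distrC; apply: Une; [exact: (zc n).1 | exact: curve_limit_D].
have e1 : U p - p = (U p - U (z n)) + ((U (z n) - z n) + (z n - p)) by rewrite !subr_telescope.
rewrite e1; apply: le_trans (ler_normD _ _) _.
apply: le_trans (lerD (lexx _) (ler_normD _ _)) _; lra.
Qed.

(* Passing to the limit in the variational inequalities of the z_n shows
   that p is the projection of u onto F. *)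
Lemma curve_limit_proj : is_metric_proj F u p.
Proof.
split; first exact: curve_limit_fixed.
move=> y Fy; apply: (variational_le_dist hip).
rewrite -oppr_le0; apply: le0_eps => e e0.
pose C := `|u - q| + `|u - y| + `|u - p| + 1.
have C0 : 0 < C.
  by rewrite /C; have := normr_ge0 (u - q); have := normr_ge0 (u - y);
    have := normr_ge0 (u - p); lra.
have [N HN] := (cvg_epsP _ _).1 zp _ (divr_gt0 e0 C0).
have h1 := HN N (leqnn N).
have h2 := ip_perturb hip (u - z N) (u - p) (z N - y) (p - y).
have h3 := curve_variational (curve_par01 N) (zc N) Fy.
rewrite subrDl2 opprK [- z N + p]addrC subrB2 [`|p - z N|]distrC in h2.
have h4 : `|z N - y| <= `|u - q| + `|u - y|.
  rewrite -(subr_telescope (z N) u y); apply: le_trans (ler_normD _ _) _.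
  by rewrite lerD2r distrC curve_seq_bounded.
have h5 : `|z N - p| * (`|z N - y| + `|u - p|) <= e.
  have h6 : `|z N - p| * C < e by rewrite -ltr_pdivlMr.
  by apply: le_trans (ltW h6); apply: ler_wpM2l => //; rewrite /C; lra.
move: h2 h5; set P := `|z N - p|; set Q := `|z N - y|; set W := `|u - p|.
move=> h2 h5; nra.
Qed.

End CurveSequence.

Lemma browder_curve : F !=set0 -> exists z p,
  [/\ forall n, on_curve (curve_par n) (z n), z @ \oo --> p & is_metric_proj F u p].
Proof.
move=> [q Fq].
have [z zc] := choice (fun n => curve_exists (curve_par01 n)).
have [p zp] := curve_seq_cvg zc Fq.
have proj := curve_limit_proj zc Fq zp.
by exists z, p.
Qed.


Section Iteration.
Variables (lam : nat -> R) (x0 : V) (x : nat -> V).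
Hypothesis hlam : steering lam.
Hypothesis Dx0 : D x0.
Hypothesis ex0 : x 0%N = x0.
Hypothesis ex : forall k, x k.+1 = lam k *: u + (1 - lam k) *: U (x k).
Variable q : V.
Hypothesis Fq : F q.

Let lam01 k : 0 <= lam k <= 1.
Proof. by case: hlam. Qed.

Let bound : R := Num.max `|u - q| `|x0 - q|.

Lemma iter_D k : D (x k).
Proof.
elim: k => [|k IH]; first by rewrite ex0.
by rewrite ex; apply: cvD => //; exact: UD.
Qed.

Lemma iter_bounded k : `|x k - q| <= bound.
Proof.
elim: k => [|k IH]; first by rewrite ex0 le_max lexx orbT.
rewrite ex convex_comb_subr; apply: le_trans (ler_normD _ _) _.
have [l0 l1] := andP (lam01 k).
rewrite !normrZ !ger0_norm ?subr_ge0 //.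
have h1 : `|U (x k) - q| <= bound.
  by rewrite -{1}(UF Fq); apply: le_trans (Une (iter_D k) (FD Fq)) IH.
have h2 : `|u - q| <= bound by rewrite le_max lexx.
have : lam k * `|u - q| <= lam k * bound by rewrite ler_wpM2l.
have : (1 - lam k) * `|U (x k) - q| <= (1 - lam k) * bound.
  by rewrite ler_wpM2l // subr_ge0.
lra.
Qed.

Let image_bound : R := `|u - q| + bound.

Lemma iter_image_bounded k : `|u - U (x k)| <= image_bound.
Proof.
rewrite -(subr_telescope u q (U (x k))); apply: le_trans (ler_normD _ _) _.
rewrite lerD2l distrC -{1}(UF Fq).
exact: le_trans (Une (iter_D k) (FD Fq)) (iter_bounded k).
Qed.

(* Consecutive differences obey a recursion of the form treated by Xu's lemma. *)
Lemma iter_step k : `|x k.+2 - x k.+1| <=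
  (1 - lam k.+1) * `|x k.+1 - x k| + image_bound * `|lam k.+1 - lam k|.
Proof.
have ed : x k.+2 - x k.+1 = (1 - lam k.+1) *: (U (x k.+1) - U (x k))
    + (lam k.+1 - lam k) *: (u - U (x k)).
  rewrite ex -(subr_telescope _ (lam k.+1 *: u + (1 - lam k.+1) *: U (x k)) _).
  rewrite subrDl2 -scalerBr; congr (_ + _).
  by rewrite ex !convex_combE subrDl2 scalerBl.
rewrite ed; apply: le_trans (ler_normD _ _) _.
have [l0 l1] := andP (lam01 k.+1).
rewrite !normrZ [`|1 - _|]ger0_norm ?subr_ge0 //; apply: lerD.
  by apply: ler_wpM2l; [rewrite subr_ge0 | exact: Une (iter_D _) (iter_D _)].
by rewrite mulrC ler_wpM2r ?iter_image_bounded.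
Qed.

Let image_bound_ge0 : 0 <= image_bound.
Proof. exact: le_trans (iter_image_bounded 0). Qed.

Lemma iter_consecutive e : 0 < e ->
  exists N, forall n, (N <= n)%N -> `|x n.+1 - x n| <= e.
Proof.
case: hlam => _ _ lamdiv lamtv.
set M := image_bound; have M0 : 0 <= M := image_bound_ge0.
apply: (@xu R (fun k => `|x k.+1 - x k|) (fun k => lam k.+1)
    (fun k => M * `|lam k.+1 - lam k|) _ _ _ (fun _ => 0)) => //.
- by move=> k; apply: mulr_ge0.
- move=> M'; have [N HN] := partial_sums_unbounded lamdiv (M' + 1).
  exists N => n Nn; have := HN n.+1 (leqW Nn).
  by rewrite big_nat_recl //=; have [_ l1] := andP (lam01 0%N); lra.
- move=> e' e'0.
  have [N HN] := series_tail_small lamtv (divr_gt0 e'0 (ltr_pwDr ltr01 M0)).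
  exists N => m n Nm mn; rewrite -mulr_sumr.
  have h := HN m n Nm mn.
  have S0 : 0 <= \sum_(m <= k < n) `|lam k.+1 - lam k| by apply: sumr_ge0.
  have : (M + 1) * \sum_(m <= k < n) `|lam k.+1 - lam k| <= e'.
    by rewrite -ler_pdivlMl //; lra.
  move: S0; set S := \sum_(_ <= _ < _) _; nra.
- by move=> e' e'0; exists 0%N => k _; exact: ltW.
- by move=> k; rewrite mulr0 addr0; exact: iter_step.
Qed.

(* Asymptotic regularity: |U x_n - x_n| -> 0, since
   |U x_n - x_n| <= |x_{n+1} - x_n| + lam_n |u - U x_n|. *)
Lemma iter_asymptotic_regular e : 0 < e ->
  exists N, forall n, (N <= n)%N -> `|U (x n) - x n| <= e.
Proof.
move=> e0; case: hlam => _ lam0 _ _.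
set M := image_bound; have M0 : 0 <= M := image_bound_ge0.
have [N1 HN1] := iter_consecutive (divr_gt0 e0 (ltr0Sn _ 1)).
have eM : 0 < e / (2 * (M + 1)) by rewrite divr_gt0 ?mulr_gt0 //; lra.
have [N2 HN2] := (cvg_epsP _ _).1 lam0 _ eM.
exists (maxn N1 N2) => n hn.
have h1 := HN1 n (leq_trans (leq_maxl _ _) hn).
have h2 := HN2 n (leq_trans (leq_maxr _ _) hn).
have [l0 l1] := andP (lam01 n).
rewrite subr0 ger0_norm // in h2.
rewrite -(subr_telescope _ (x n.+1) _); apply: le_trans (ler_normD _ _) _.
have e1 : x n.+1 - U (x n) = lam n *: (u - U (x n)).
  by rewrite ex convex_combE addrC addKr.
rewrite distrC e1 normrZ ger0_norm //.
have h3 : lam n * (2 * (M + 1)) < e by rewrite -ltr_pdivlMr //; lra.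
have := iter_image_bounded n; have := normr_ge0 (u - U (x n)).
move: h1 h3; set A := `|x n.+1 - x n|; set B := `|u - U (x n)|; set L := lam n.
rewrite -/M; nra.
Qed.

Lemma iter_limsup z p : (forall n, on_curve (curve_par n) (z n)) ->
  z @ \oo --> p ->
  forall e, 0 < e -> exists N, forall k, (N <= k)%N -> ip (u - p) (x k - p) <= e.
Proof.
move=> zc zp e e0.
have b0 : 0 <= bound := le_trans (normr_ge0 _) (iter_bounded 0).
pose C := bound + `|p - q| + `|u - q| + 1.
have C0 : 0 < C by rewrite /C; have := normr_ge0 (p - q); have := normr_ge0 (u - q); lra.
have [n Hn] := (cvg_epsP _ _).1 zp _ (divr_gt0 e0 (mulr_gt0 (ltr0Sn _ 1) C0)).
have hzn := Hn n (leqnn n).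
have [tn0 tn1] := andP (curve_par01 n).
pose B := bound + 2 * `|u - q|.
have B1 : 0 < B + 1 by rewrite /B; have := normr_ge0 (u - q); lra.
have zxB k : `|z n - x k| <= B.
  have a1 := ler_normD (z n - u) (u - x k).
  have a2 := ler_normD (u - q) (q - x k).
  rewrite subr_telescope [`|z n - u|]distrC in a1.
  rewrite subr_telescope [`|q - x k|]distrC in a2.
  have := curve_seq_bounded zc Fq n; have := iter_bounded k; rewrite /B; lra.
have eta0 : 0 < e * curve_par n / (2 * (B + 1)).
  by rewrite divr_gt0 ?mulr_gt0.
have [K HK] := iter_asymptotic_regular eta0.
exists K => k Kk.
have est := curve_estimate p (curve_par01 n) (zc n) (iter_D k).
have hA : `|U (x k) - x k| * `|z n - x k| / curve_par n <= e / 2.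
  rewrite ler_pdivrMr //.
  apply: le_trans (ler_pM (normr_ge0 _) (normr_ge0 _) (HK k Kk) (zxB k)) _.
  have <- : e * curve_par n / (2 * (B + 1)) * (B + 1) = e / 2 * curve_par n.
    by field; rewrite gt_eqF.
  by apply: ler_wpM2l; [exact: ltW | rewrite lerDl].
have hB : `|z n - p| * (`|x k - p| + `|u - z n|) <= e / 2.
  have hxp : `|x k - p| <= bound + `|p - q|.
    have := ler_normD (x k - q) (q - p); rewrite subr_telescope [`|q - p|]distrC.
    by have := iter_bounded k; lra.
  have hzu := curve_seq_bounded zc Fq n.
  have hzC : `|z n - p| * C <= e / 2.
    by rewrite -ler_pdivlMr // -mulrA -invfM; exact: ltW.
  apply: le_trans hzC; apply: ler_wpM2l => //; rewrite /C; lra.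
lra.
Qed.

Lemma iter_sq_recursion p : D p -> U p = p -> forall k,
  `|x k.+1 - p| ^+ 2 <=
    (1 - lam k) * `|x k - p| ^+ 2 + lam k * (2 * ip (u - p) (x k.+1 - p)).
Proof.
move=> Dp Up k; have [l0 l1] := andP (lam01 k).
set a := lam k *: (u - p); set b := (1 - lam k) *: (U (x k) - p).
have eX : x k.+1 - p = a + b by rewrite ex convex_comb_subr.
have hb : `|b| ^+ 2 <= (1 - lam k) * `|x k - p| ^+ 2.
  have hU : `|U (x k) - p| <= `|x k - p| by rewrite -{1}Up; apply: Une (iter_D k) Dp.
  rewrite /b normrZ ger0_norm ?subr_ge0 // exprMn.
  have hU2 : `|U (x k) - p| ^+ 2 <= `|x k - p| ^+ 2.
    by rewrite lerXn2r ?nnegrE.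
  have hl : (1 - lam k) ^+ 2 <= 1 - lam k.
    by rewrite expr2 ler_piMl ?subr_ge0 // lerBlDr lerDl.
  apply: le_trans (ler_pM (sqr_ge0 _) (sqr_ge0 _) hl hU2) _.
  by rewrite ler_wpM2r ?sqr_ge0.
have ha : ip a (a + b) = `|a| ^+ 2 + ip a b by rewrite (ipDr hip) (ipxx hip).
have := normD2 hip a b; rewrite -eX /a (ipZl hip) in ha *; rewrite -/a.
have := sqr_ge0 `|a|; move: ha hb.
set A := `|a| ^+ 2; set I := ip a b; set J := ip (u - p) (a + b); lra.
Qed.

Lemma iter_cvg z p : (forall n, on_curve (curve_par n) (z n)) ->
  z @ \oo --> p -> D p -> U p = p -> x @ \oo --> p.
Proof.
move=> zc zp Dp Up; case: hlam => _ _ lamdiv _.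
have sq_small : forall e, 0 < e -> exists N, forall n, (N <= n)%N ->
    `|x n - p| ^+ 2 <= e.
  apply: (@xu R (fun k => `|x k - p| ^+ 2) lam (fun _ => 0)
    (fun k => sqr_ge0 _) lam01 (fun _ => lexx 0)
    (fun k => 2 * ip (u - p) (x k.+1 - p)) (partial_sums_unbounded lamdiv)).
  - by move=> e e0; exists 0%N => m n _ _; rewrite big1 // ltW.
  - move=> e e0; have [K HK] := iter_limsup zc zp (divr_gt0 e0 (ltr0Sn _ 1)).
    by exists K => k Kk; have := HK k.+1 (leqW Kk); lra.
  - by move=> k; rewrite addr0; exact: iter_sq_recursion.
apply/cvg_epsP => e e0.
have [N HN] := sq_small _ (divr_gt0 (exprn_gt0 2 e0) (ltr0Sn _ 1)).
exists N => n Nn; have := HN n Nn; have := normr_ge0 (x n - p); nra.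
Qed.

End Iteration.

Theorem halpern (lam : nat -> R) (x0 : V) (x : nat -> V) :
  steering lam -> D x0 -> x 0%N = x0 ->
  (forall k, x k.+1 = lam k *: u + (1 - lam k) *: U (x k)) -> F !=set0 ->
  exists2 p, is_metric_proj F u p & x @ \oo --> p.
Proof.
move=> hlam Dx0 ex0 ex F0; have [q Fq] := F0.
have [z [p [zc zp proj]]] := browder_curve F0.
have Fp : F p := proj.1.
have xp := iter_cvg hlam Dx0 ex0 ex Fq zc zp (FD Fp) (UF Fp).
by exists p.
Qed.

End Halpern.

Theorem theorem6 (R : realType) (V : completeNormedModType R)
  (ip : V -> V -> R) (D : set V) (m : nat) (T : 'I_m -> V -> V)
  (N : nat) (Omega : 'I_N -> seq (seq 'I_m)) (w : 'I_N -> seq 'I_m -> R)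
  (hw : 'I_N -> R) (lam : nat -> R) (u x0 : V) (x : nat -> V) :
  is_inner_product ip ->
  D !=set0 -> closed D -> convex_subset D ->
  (forall i, maps_into D (T i)) ->
  (forall i, firmly_nonexpansive ip D (T i)) ->
  common_fix D T !=set0 ->
  (0 < N)%N ->
  (forall r, in_M (Omega r) (w r)) ->
  (forall r s, r != s -> ~ same_pair (Omega r) (Omega s) (w r) (w s)) ->
  (forall r, 0 < hw r) -> \sum_(r < N) hw r = 1 ->
  steering lam ->
  D u -> D x0 ->
  x 0%N = x0 ->
  (forall k, x k.+1 = lam k *: u
               + (1 - lam k) *: \sum_(r < N) hw r *: T_S T (Omega r) (w r) (x k)) ->
  exists2 p, is_metric_proj (common_fix D T) u p & x @ \oo --> p.
Proof.
move=> hip _ cD cvD TD Tfne F0 N_gt0 hM _ hwpos hwsum hlam Du Dx0 ex0 ex.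
apply: (halpern hip (U := avg_op T Omega w hw) cD cvD _ _ _ _ _ Du hlam Dx0 ex0 ex F0).
- move=> y; exact (avg_D TD hM hwpos hwsum N_gt0 cvD).
- exact (avg_nonexpansive hip TD Tfne hM hwpos hwsum).
- by move=> q [].
- exact (avg_fix hM hwsum).
- move=> y; exact (avg_fix_common hip TD Tfne hM hwpos hwsum N_gt0 F0).
Qed.
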